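(* Let $G$ be a finite, simple, connected graph with $\dim_{wt}(G)=2$ and let $\{u,v\}$ be a weak total metric basis of $G$. Then: (1) there is a unique geodesic (shortest path) $P$ between $u$ and $v$; (2) every neighbor of $u$ and every neighbor of $v$ has degree at most three; (3) every vertex of $P$ other than $u$, $v$ and their neighbors has degree at most five; (4) the maximum degree of $G$ is at most eight; (5) for each $w\in\{u,v\}$ and each $z\in N(w)$, every $r\in N(z)$ satisfies $r\not\sim w$.
   Context: $d(x,y)$ is the shortest-path distance, $N(x)$ the set of neighbors of $x$, and $x\sim y$ denotes adjacency. A set $W\subseteq V(G)$ is a resolving set if for every two distinct vertices $y,z$ there is $x\in W$ with $d(y,x)\ne d(z,x)$. A set $W$ is a weak total resolving set (WTR-set) if $W$ is resolving and, for every $w\in W$ and every $x\in V(G)\setminus W$, there is $w'\in W\setminus\{w\}$ with $d(x,w')\ne d(w,w')$. $\dim_{wt}(G)$ is the minimum cardinality of a WTR-set, and a weak total metric basis is a WTR-set of that cardinality. *)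

(* A finite simple graph is a symmetric irreflexive relation
   e : rel T on a finType T. *)
From mathcomp Require Import all_boot.
Set Implicit Arguments. Unset Strict Implicit. Unset Printing Implicit Defensive.

Section Graph.
Variables (T : finType) (e : rel T).

Fixpoint walkn (n : nat) (x y : T) : bool :=
  if n is n'.+1 then [exists z, e x z && walkn n' z y] else x == y.

(* shortest-path distance: least n with a walk of length n
   (in a connected graph this is < #|T|; returns #|T| if unreachable) *)
Definition dist (x y : T) : nat :=
  find (fun n => walkn n x y) (iota 0 #|T|).

Definition nbhd (x : T) : {set T} := [set y | e x y].
Definition deg (x : T) : nat := #|nbhd x|.

Definition connected_graph : Prop := forall x y : T, connect e x y.

Definition resolving (W : {set T}) : bool :=
  [forall y, forall z, (y != z) ==> [exists x in W, dist y x != dist z x]].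

Definition wtr_set (W : {set T}) : bool :=
  resolving W &&
  [forall w in W, forall x in ~: W,
     [exists w' in W :\ w, dist x w' != dist w w']].

(* dim_wt: minimum cardinality of a WTR-set (the full vertex set is one) *)
Definition dim_wt : nat :=
  find (fun k => [exists W : {set T}, wtr_set W && (#|W| == k)]) (iota 0 #|T|.+1).

Definition wt_metric_basis (W : {set T}) : bool :=
  wtr_set W && (#|W| == dim_wt).

(* p is (the vertex sequence after u of) a geodesic from u to v *)
Definition geodesic (u v : T) (p : seq T) : bool :=
  [&& path e u p, last u p == v & size p == dist u v].

End Graph.

From mathcomp Require Import all_boot zify.
Set Implicit Arguments. Unset Strict Implicit. Unset Printing Implicit Defensive.

(* Everything rests on the distance vector [code x = (d(x,u), d(x,v))], which a
   WTR-set {u, v} makes injective, and on the fact that it moves by at most one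
   in each coordinate along an edge. So a vertex x has at most 8 neighbours,
   and only 5 when d(x,u) + d(x,v) = d(u,v), since the triangle inequality then
   forbids the codes with a smaller sum; every vertex of a geodesic is of this
   kind, and the i-th vertices of two geodesics share the code (i, d(u,v) - i),
   so the geodesic is unique. The weak total condition adds that no vertex
   other than u has d(x,v) = d(u,v): two adjacent neighbours z, r of u would
   then have d(z,v), d(r,v) in {d(u,v) - 1, d(u,v) + 1}, distinct and within 1
   of each other, which is impossible. Hence the neighbours of a neighbour z of
   u other than u lie at distance 2 from u, which leaves them 2 codes. *)

Section Distance.
Variables (T : finType) (e : rel T).

Lemma walkn_cat m n x y z : walkn e m x y -> walkn e n y z -> walkn e (m + n) x z.
Proof.
elim: m x => [|m IH] x /=; first by move=> /eqP ->.
move=> /existsP [w /andP [exw hw]] hn; apply/existsP; exists w.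
by rewrite exw (IH _ hw hn).
Qed.

Lemma path_walkn x p : path e x p -> walkn e (size p) x (last x p).
Proof.
elim: p x => [|y p IH] x //= /andP [exy hp].
by apply/existsP; exists y; rewrite exy IH.
Qed.

Lemma walkn_path n x y :
  walkn e n x y -> exists p, [&& path e x p, last x p == y & size p == n].
Proof.
elim: n x => [|n IH] x /=; first by move=> /eqP ->; exists [::]; rewrite /= eqxx.
move=> /existsP [w /andP [exw /IH [p /and3P [hp hl hs]]]].
by exists (w :: p); rewrite /= exw hp hl eqSS hs.
Qed.

Lemma path_nth_walkn x p i : path e x p -> i <= size p ->
  walkn e i x (nth x (x :: p) i) && walkn e (size p - i) (nth x (x :: p) i) (last x p).
Proof.
elim: p x i => [|y p IH] x [|i] //=; first by rewrite !eqxx.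
  by move=> /andP [exy hp] _; rewrite eqxx; apply/existsP; exists y; rewrite exy path_walkn.
move=> /andP [exy hp] hi; have /andP [h1 h2] := IH y i hp hi.
rewrite subSS (set_nth_default y x) //= h2 andbT.
by apply/existsP; exists y; rewrite exy h1.
Qed.

Lemma dist_leq_walkn n x y : walkn e n x y -> dist e x y <= n.
Proof.
move=> h; rewrite /dist; case: (ltnP n #|T|) => hn.
  rewrite leqNgt; apply/negP => /(before_find 0).
  by rewrite nth_iota // add0n h.
by apply: leq_trans (find_size _ _) _; rewrite size_iota.
Qed.

Hypothesis e_conn : connected_graph e.

Lemma walkn_dist x y : walkn e (dist e x y) x y.
Proof.
have [n hn hw] : exists2 n, n < #|T| & walkn e n x y.
  have /connectP [p hp ->] := e_conn x y.
  have [p' hp' hu _] := shortenP hp.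
  exists (size p'); last exact: path_walkn.
  by move/card_uniqP: hu => /= <-; apply: max_card.
set P := fun n => walkn e n x y.
have hP : has P (iota 0 #|T|) by apply/hasP; exists n; rewrite ?mem_iota.
have hf : find P (iota 0 #|T|) < #|T| by rewrite -{2}(size_iota 0 #|T|) -has_find.
by have := nth_find 0 hP; rewrite nth_iota.
Qed.

Lemma dist_triangle x y z : dist e x z <= dist e x y + dist e y z.
Proof. by apply: dist_leq_walkn; apply: walkn_cat; apply: walkn_dist. Qed.

Lemma dist_edge x y z : e x y -> dist e x z <= (dist e y z).+1.
Proof. by move=> exy; apply: dist_leq_walkn => /=; apply/existsP; exists y; rewrite exy walkn_dist. Qed.

Lemma dist_eq0 x y : (dist e x y == 0) = (x == y).
Proof.
apply/idP/idP => [/eqP h | /eqP ->]; first by have := walkn_dist x y; rewrite h.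
by rewrite -leqn0; apply: (@dist_leq_walkn 0) => /=.
Qed.

Lemma dist_xx x : dist e x x = 0.
Proof. by apply/eqP; rewrite dist_eq0. Qed.

Hypothesis e_sym : symmetric e.

Lemma walkn_sym n x y : walkn e n x y -> walkn e n y x.
Proof.
elim: n x => [|n IH] x /=; first by rewrite eq_sym.
move=> /existsP [w /andP [exw /IH hw]].
have hwx : walkn e 1 w x by apply/existsP; exists x; rewrite e_sym exw eqxx.
by have := walkn_cat hw hwx; rewrite addn1.
Qed.

Lemma dist_sym x y : dist e x y = dist e y x.
Proof. by apply/eqP; rewrite eqn_leq !dist_leq_walkn // walkn_sym // walkn_dist. Qed.

Lemma dist_edge_bounds x y z :
  e x y -> dist e x z <= (dist e y z).+1 /\ dist e y z <= (dist e x z).+1.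
Proof. by move=> exy; split; apply: dist_edge; rewrite // e_sym. Qed.

Lemma geodesic_nth_dist u v p i : geodesic e u v p -> i <= dist e u v ->
  dist e u (nth u (u :: p) i) = i /\ dist e (nth u (u :: p) i) v = dist e u v - i.
Proof.
case/and3P=> hp /eqP hl /eqP hs hi; rewrite -hs in hi.
have /andP [/dist_leq_walkn h1 /dist_leq_walkn h2] := path_nth_walkn hp hi.
have := dist_triangle u (nth u (u :: p) i) v.
by rewrite hl hs in h2 *; lia.
Qed.

Lemma mem_geodesic_dist u v p x : geodesic e u v p -> x \in u :: p ->
  dist e x u + dist e x v = dist e u v.
Proof.
move=> geo hx; have hi : index x (u :: p) <= dist e u v.
  by case/and3P: geo hx => _ _ /eqP <-; rewrite -index_mem.
have [] := geodesic_nth_dist geo hi; rewrite nth_index // dist_sym; lia.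
Qed.

Hypothesis e_irr : irreflexive e.

Lemma dist_eq1 x y : (dist e x y == 1) = e x y.
Proof.
apply/idP/idP => [/eqP h | exy].
  by have := walkn_dist x y; rewrite h /= => /existsP [w /andP [? /eqP <-]].
rewrite eqn_leq (@dist_leq_walkn 1) /=; last by apply/existsP; exists y; rewrite exy eqxx.
by rewrite lt0n dist_eq0; apply: contraTneq exy => ->; rewrite e_irr.
Qed.

Section WeakTotalPair.
Variables u v : T.
Hypothesis hwtr : wtr_set e [set u; v].

Definition code x := (dist e x u, dist e x v).

Lemma code_inj : injective code.
Proof.
move=> y z [h1 h2]; apply/eqP; apply: contraT => hyz.
case/andP: hwtr => /forallP /(_ y) /forallP /(_ z) /implyP /(_ hyz) /existsP [x] /andP [].
by rewrite in_set2 => /orP [] /eqP ->; rewrite ?h1 ?h2 eqxx.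
Qed.

Lemma deg_leq_codes x (L : seq (nat * nat)) :
  (forall y, e x y -> code y \in L) -> deg e x <= size L.
Proof.
move=> hL; rewrite /deg cardE -(size_map code); apply: uniq_leq_size.
  by rewrite (map_inj_uniq code_inj) enum_uniq.
by move=> c /mapP [y]; rewrite mem_enum inE => /hL hy ->.
Qed.

Lemma neighbour_code_neq x y : e x y -> code y != code x.
Proof. by move=> exy; rewrite (inj_eq code_inj); apply: contraTneq exy => ->; rewrite e_irr. Qed.

Lemma deg_leq8 x : deg e x <= 8.
Proof.
set a := dist e x u; set b := dist e x v.
apply: (@deg_leq_codes x [:: (a-1, b-1); (a-1, b); (a-1, b+1); (a, b-1); (a, b+1);
   (a+1, b-1); (a+1, b); (a+1, b+1)]) => y exy.
have [hu1 hu2] := dist_edge_bounds u exy; have [hv1 hv2] := dist_edge_bounds v exy.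
have := neighbour_code_neq exy.
by rewrite /code /a /b !inE !xpair_eqE; lia.
Qed.

Lemma deg_leq5_between x : dist e x u + dist e x v = dist e u v -> deg e x <= 5.
Proof.
move=> hx; set a := dist e x u; set b := dist e x v.
apply: (@deg_leq_codes x [:: (a-1, b+1); (a, b+1); (a+1, b+1); (a+1, b); (a+1, b-1)])
  => y exy.
have [hu1 hu2] := dist_edge_bounds u exy; have [hv1 hv2] := dist_edge_bounds v exy.
have := dist_triangle u y v; rewrite (dist_sym u y).
have := neighbour_code_neq exy.
by rewrite /code /a /b !inE !xpair_eqE; lia.
Qed.

Lemma geodesic_unique p q : geodesic e u v p -> geodesic e u v q -> q = p.
Proof.
move=> gp gq; have /and3P [_ _ /eqP sp] := gp; have /and3P [_ _ /eqP sq] := gq.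
apply: (eq_from_nth (x0 := u)) => [|i hi]; first by rewrite sp sq.
rewrite sq in hi; apply: code_inj; rewrite /code !(dist_sym _ u).
have [p1 p2] := geodesic_nth_dist gp hi; have [q1 q2] := geodesic_nth_dist gq hi.
by rewrite /= in p1 p2 q1 q2; rewrite p1 p2 q1 q2.
Qed.

Hypothesis huv : u != v.

Lemma dist_neq_dist_uv x : x != u -> dist e x v != dist e u v.
Proof.
move=> hxu; have [->|hxv] := eqVneq x v; first by rewrite dist_xx eq_sym dist_eq0.
case/andP: hwtr => _ /forallP /(_ u); rewrite in_set2 eqxx /= => /forallP /(_ x).
rewrite in_setC in_set2 (negbTE hxu) (negbTE hxv) /= => /existsP [w].
by rewrite in_setD1 in_set2 => /andP [/andP [hwu /orP [/eqP hw | /eqP ->]]] //; rewrite hw eqxx in hwu.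
Qed.

Lemma nbhd_nbhd_not_adj z r : e u z -> e z r -> ~~ e r u.
Proof.
move=> euz ezr; apply/negP => eru.
have hzu : z != u by apply: contraTneq euz => ->; rewrite e_irr.
have hru : r != u by apply: contraTneq eru => ->; rewrite e_irr.
have hzr : code r != code z by apply: neighbour_code_neq.
have h1z : dist e z u = 1 by apply/eqP; rewrite dist_eq1 e_sym.
have h1r : dist e r u = 1 by apply/eqP; rewrite dist_eq1.
have := dist_neq_dist_uv hzu; have := dist_neq_dist_uv hru.
have [] := dist_edge_bounds v euz; have [] := dist_edge_bounds v eru.
have [] := dist_edge_bounds v ezr.
by move: hzr; rewrite /code h1z h1r xpair_eqE eqxx /=; lia.
Qed.

Lemma deg_nbhd_leq3 z : e u z -> deg e z <= 3.
Proof.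
move=> euz; set D := dist e u v; set b := dist e z v.
have hzu : z != u by apply: contraTneq euz => ->; rewrite e_irr.
have hbD := dist_neq_dist_uv hzu; have [hb1 hb2] := dist_edge_bounds v euz.
(* b is D - 1 or D + 1, and only u has a code with second entry D. *)
apply: (@deg_leq_codes z [:: (0, D); (2, b); (2, if b < D then b.-1 else b.+1)]) => r ezr.
have [->|hru] := eqVneq r u; first by rewrite /code dist_xx mem_head.
have hr2 : dist e r u = 2.
  have h0 : dist e r u != 0 by rewrite dist_eq0.
  have h1 : dist e r u != 1 by rewrite dist_eq1 (nbhd_nbhd_not_adj euz ezr).
  have [_] := dist_edge_bounds u ezr; have /eqP -> : dist e z u == 1 by rewrite dist_eq1 e_sym.
  lia.
have := dist_neq_dist_uv hru; have [] := dist_edge_bounds v ezr.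
by rewrite /code hr2 !inE !xpair_eqE /b /D; case: ltnP; lia.
Qed.

End WeakTotalPair.
End Distance.

Theorem theorem2 (T : finType) (e : rel T)
  (e_sym : symmetric e) (e_irr : irreflexive e) (e_conn : connected_graph e)
  (u v : T)
  (hdim : dim_wt e = 2)
  (hbasis : wt_metric_basis e [set u; v]) :
  (* (1) unique geodesic P = u :: p, and (3) on its interior vertices *)
  (exists p : seq T,
      [/\ geodesic e u v p,
          (forall q : seq T, geodesic e u v q -> q = p) &
          (forall x, x \in u :: p -> x != u -> x != v ->
             ~~ e u x -> ~~ e v x -> deg e x <= 5)]) /\
  (* (2) *)
  (forall z, (e u z || e v z) -> deg e z <= 3) /\
  (* (4) *)
  (forall x, deg e x <= 8) /\
  (* (5) *)
  (forall w, w \in [set u; v] -> forall z, e w z -> forall r, e z r -> ~~ e r w).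
Proof.
case/andP: hbasis => hwuv /eqP; rewrite hdim cards2.
have [//|huv _] := eqVneq u v.
have hwvu : wtr_set e [set v; u] by rewrite setUC.
have hvu : v != u by rewrite eq_sym.
split; [|split; [|split]].
- have [p hgeo] := walkn_path (walkn_dist e_conn u v).
  exists p; split=> // [q|x hx _ _ _ _].
    exact: (geodesic_unique e_conn e_sym hwuv).
  exact/(deg_leq5_between e_conn e_sym e_irr hwuv)/(mem_geodesic_dist e_conn e_sym hgeo).
- move=> z /orP [];
    [exact: (deg_nbhd_leq3 e_conn e_sym e_irr hwuv) | exact: (deg_nbhd_leq3 e_conn e_sym e_irr hwvu)].
- exact: (deg_leq8 e_conn e_sym e_irr hwuv).
- move=> w; rewrite in_set2 => /orP [] /eqP -> z ewz r ezr.
    exact: (nbhd_nbhd_not_adj e_conn e_sym e_irr hwuv huv ewz).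
  exact: (nbhd_nbhd_not_adj e_conn e_sym e_irr hwvu hvu ewz).
Qed.
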